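(* Let $n$ be a positive integer, let $X=\{(x,y)\in\mathbb{Z}^2 : \max(|x|,|y|) = n\}$ (the boundary of the digital square $[-n,n]_{\mathbb{Z}}^2$), and let $Y = X\setminus\{(n,n)\}$. Let $d=d_1$ be the Manhattan metric $d_1((x_1,x_2),(y_1,y_2))=|x_1-y_1|+|x_2-y_2|$ and $\kappa=c_1$. Then $H_1(X,Y)=1$ and $\delta_{d}(X,Y)\ge 2n-1$.
   Context: $[a,b]_{\mathbb{Z}}$ denotes $\{k\in\mathbb{Z}: a\le k\le b\}$. In $\mathbb{Z}^2$, two distinct points are $c_1$-adjacent if they differ by exactly $1$ in exactly one coordinate and agree in the other (4-adjacency). A function $f$ between subsets of $\mathbb{Z}^2$ is $c_1$-continuous if whenever $x,x'$ are $c_1$-adjacent, $f(x)$ and $f(x')$ are equal or $c_1$-adjacent. $H_1$ is the Hausdorff metric based on $d_1$: for nonempty finite $A,B$, $H_1(A,B)=\min\{\varepsilon\ge0 : \forall a\in A\ \exists b\in B,\ d_1(a,b)\le\varepsilon,\ \text{and}\ \forall b\in B\ \exists a\in A,\ d_1(a,b)\le\varepsilon\}$. Borsuk's metric of continuity $\delta_d(X,Y)$ is the greatest lower bound of the numbers $t>0$ such that there exist $c_1$-continuous maps $f:X\to Y$ and $g:Y\to X$ with $d(x,f(x))\le t$ for all $x\in X$ and $d(y,g(y))\le t$ for all $y\in Y$. *)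

From Stdlib Require Import Reals ZArith Lra Lia.
From Coquelicot Require Import Coquelicot.
Open Scope R_scope.

Definition pt := (Z * Z)%type.

Definition d1 (p q : pt) : R :=
  IZR (Z.abs (fst p - fst q) + Z.abs (snd p - snd q))%Z.

Definition c1_adj (p q : pt) : Prop :=
  (fst p = fst q /\ Z.abs (snd p - snd q) = 1%Z) \/
  (snd p = snd q /\ Z.abs (fst p - fst q) = 1%Z).

Definition c1_continuous (A B : pt -> Prop) (f : pt -> pt) : Prop :=
  (forall x, A x -> B (f x)) /\
  (forall x x', A x -> A x' -> c1_adj x x' -> f x = f x' \/ c1_adj (f x) (f x')).

Definition hausdorff_ok (A B : pt -> Prop) (eps : R) : Prop :=
  0 <= eps /\
  (forall a, A a -> exists b, B b /\ d1 a b <= eps) /\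
  (forall b, B b -> exists a, A a /\ d1 a b <= eps).

(* H_1(A,B) = min of admissible eps (taken as greatest lower bound) *)
Definition H1 (A B : pt -> Prop) : Rbar := Glb_Rbar (hausdorff_ok A B).

Definition borsuk_ok (X Y : pt -> Prop) (t : R) : Prop :=
  0 < t /\ exists f g : pt -> pt,
    c1_continuous X Y f /\ c1_continuous Y X g /\
    (forall x, X x -> d1 x (f x) <= t) /\
    (forall y, Y y -> d1 y (g y) <= t).

Definition delta_d1 (X Y : pt -> Prop) : Rbar := Glb_Rbar (borsuk_ok X Y).

Definition sq_boundary (n : Z) (p : pt) : Prop :=
  Z.max (Z.abs (fst p)) (Z.abs (snd p)) = n.

Definition sq_boundary_minus (n : Z) (p : pt) : Prop :=
  sq_boundary n p /\ p <> (n, n).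

(** The boundary X of the square is a cycle of length 8n; removing the corner
    (n, n) turns it into the path Y, on which a position index is well defined
    and changes by at most 1 along c_1-adjacent points.  Composing a
    c_1-continuous f : X -> Y with a unit-speed parametrisation of X gives an
    8n-periodic, 1-Lipschitz integer sequence P, so the displacement P k - k
    drops by exactly 8n over one period in steps of at most 2.  Hence it hits
    4n - 1 or 4n modulo 8n, i.e. f sends some point to (a neighbour of) its
    antipode, at d_1-distance at least 2n - 1.  For H_1 the corner (n, n) is at
    distance 1 from Y, and every other point of X lies in Y. *)

From Pilot Require Import Defs.
From Stdlib Require Import Reals ZArith Lra Lia.
From Coquelicot Require Import Coquelicot.
(* Coquelicot also exports a [d1]; bring the Manhattan metric back into scope. *)
Import Defs.
Open Scope R_scope.

Lemma Glb_Rbar_min (E : R -> Prop) (m : R) :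
  E m -> (forall x, E x -> m <= x) -> Glb_Rbar E = Finite m.
Proof.
  intros Em Hm. apply is_glb_Rbar_unique. split.
  - intros x Ex. exact (Hm x Ex).
  - intros b Hb. exact (Hb m Em).
Qed.

Lemma Glb_Rbar_lower (E : R -> Prop) (m : R) :
  (forall x, E x -> m <= x) -> Rbar_le (Finite m) (Glb_Rbar E).
Proof. intros Hm. apply (Glb_Rbar_correct E). exact Hm. Qed.

Lemma pt_eq_dec (p q : pt) : {p = q} + {p <> q}.
Proof. decide equality; apply Z.eq_dec. Qed.

Lemma pair_neq (x y a b : Z) : (x, y) <> (a, b) -> (x <> a \/ y <> b)%Z.
Proof.
  intros H. destruct (Z.eq_dec x a) as [-> | Hx]; [right; congruence | left; exact Hx].
Qed.

Definition opp_pt (p : pt) : pt := (- fst p, - snd p)%Z.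

Lemma d1_self (p : pt) : d1 p p = 0.
Proof. unfold d1. rewrite !Z.sub_diag. reflexivity. Qed.

Lemma d1_neq (p q : pt) : p <> q -> 1 <= d1 p q.
Proof.
  destruct p as [x y], q as [x' y']; unfold d1; cbn [fst snd]. intros Hpq.
  apply IZR_le. destruct (Z.eq_dec x x'), (Z.eq_dec y y'); subst; try lia.
  now destruct Hpq.
Qed.

Lemma d1_c1_adj (p q : pt) : c1_adj p q -> d1 p q = 1.
Proof. unfold c1_adj, d1. intros H. f_equal. lia. Qed.

Lemma d1_triangle (p q r : pt) : d1 p r <= d1 p q + d1 q r.
Proof. unfold d1. rewrite <- plus_IZR. apply IZR_le. lia. Qed.

Lemma d1_opp_boundary (n : Z) (p : pt) :
  sq_boundary n p -> 2 * IZR n <= d1 p (opp_pt p).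
Proof.
  unfold sq_boundary, d1, opp_pt; cbn [fst snd]. intros Hp.
  rewrite <- mult_IZR. apply IZR_le. lia.
Qed.

Section IntegerSequences.
Local Open Scope Z_scope.

Lemma Z_seq_crossing (D : Z -> Z) (w N : Z) :
  0 <= N -> w <= D 0 -> D N < w -> exists k, w <= D k /\ D (k + 1) < w.
Proof.
  intros HN H0. pattern N. apply natlike_ind; [lia | | exact HN].
  intros m Hm IH HSm.
  destruct (Z_lt_le_dec (D m) w) as [Hlt | Hle].
  - exact (IH Hlt).
  - exists m. split; [exact Hle | exact HSm].
Qed.

(** The displacement [P k - k] loses exactly [N] over a period, in steps of at
    most 2, so it cannot jump over a whole residue class modulo [N]. *)
Lemma Z_lipschitz_periodic_shift (P : Z -> Z) (N v : Z) :
  0 < N -> P N = P 0 ->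
  (forall k, Z.abs (P (k + 1) - P k) <= 1) ->
  exists k, P k mod N = (k + v) mod N \/ P k mod N = (k + (v + 1)) mod N.
Proof.
  intros HN Hper Hlip.
  set (q := (P 0 - v) / N).
  set (w := v + N * q).
  assert (Hw : w <= P 0 < w + N).
  { pose proof (Z.div_mod (P 0 - v) N ltac:(lia)).
    pose proof (Z.mod_pos_bound (P 0 - v) N HN). unfold w, q. lia. }
  destruct (Z_seq_crossing (fun k => P k - k) w N) as [k [Hk Hk1]];
    cbn beta; try lia.
  pose proof (Hlip k) as Hstep.
  exists k.
  assert (Hcases : P k - k = w \/ P k - k = w + 1) by lia.
  destruct Hcases as [E | E]; [left | right]; apply Z.cong_iff_ex;
    exists q; unfold w in E; lia.
Qed.

End IntegerSequences.

Section SquareBoundary.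

Variable n : Z.
Hypothesis n_pos : (0 < n)%Z.

(** Walks the boundary counterclockwise from the corner (n, n), one unit step
    per increment of [m], for 0 <= m < 8n. *)
Definition sq_path (m : Z) : pt :=
  if (m <=? 2 * n)%Z then (n - m, n)%Z
  else if (m <=? 4 * n)%Z then (- n, 3 * n - m)%Z
  else if (m <=? 6 * n)%Z then (m - 5 * n, - n)%Z
  else (n, m - 7 * n)%Z.

Definition sq_loop (k : Z) : pt := sq_path (k mod (8 * n)).

Definition sq_index (p : pt) : Z :=
  let (x, y) := p in
  if (y =? n)%Z then (n - x)%Z
  else if (x =? - n)%Z then (3 * n - y)%Z
  else if (y =? - n)%Z then (x + 5 * n)%Z
  else (7 * n + y)%Z.

Ltac split_tests := repeat match goal with
  | |- context [if (?a <=? ?b)%Z then _ else _] => destruct (Z.leb_spec a b)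
  | |- context [if (?a =? ?b)%Z then _ else _] => destruct (Z.eqb_spec a b)
  end.

Lemma sq_path_boundary (m : Z) : (0 <= m < 8 * n)%Z -> sq_boundary n (sq_path m).
Proof. intros. unfold sq_boundary, sq_path. split_tests; cbn [fst snd]; lia. Qed.

Lemma sq_path_succ_adj (m : Z) :
  (0 <= m)%Z -> (m + 1 < 8 * n)%Z -> c1_adj (sq_path m) (sq_path (m + 1)).
Proof. intros. unfold c1_adj, sq_path. split_tests; cbn [fst snd]; lia. Qed.

Lemma sq_path_last_adj : c1_adj (sq_path (8 * n - 1)) (sq_path 0).
Proof. unfold c1_adj, sq_path. split_tests; cbn [fst snd]; lia. Qed.

Lemma sq_path_add_half (m : Z) :
  (0 <= m < 4 * n)%Z -> sq_path (m + 4 * n) = opp_pt (sq_path m).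
Proof. intros. unfold opp_pt, sq_path. split_tests; cbn [fst snd]; f_equal; lia. Qed.

Lemma sq_index_bound (p : pt) : sq_boundary n p -> (0 <= sq_index p < 8 * n)%Z.
Proof.
  destruct p as [x y]; unfold sq_boundary, sq_index; cbn [fst snd]. intros.
  split_tests; lia.
Qed.

Lemma sq_path_index (p : pt) : sq_boundary n p -> sq_path (sq_index p) = p.
Proof.
  destruct p as [x y]; unfold sq_boundary, sq_index; cbn [fst snd]. intros.
  split_tests; unfold sq_path; split_tests; f_equal; lia.
Qed.

Lemma sq_boundary_cases (x y : Z) : sq_boundary n (x, y) ->
  (- n <= x <= n /\ - n <= y <= n /\ (x = n \/ x = - n \/ y = n \/ y = - n))%Z.
Proof. unfold sq_boundary; cbn [fst snd]. lia. Qed.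

(** Away from the corner (n, n) the index is the arclength along the path Y, so
    it is 1-Lipschitz for c_1-adjacency; at the corner it would jump from 8n - 1
    to 0. *)
Lemma sq_index_adj (p q : pt) :
  sq_boundary_minus n p -> sq_boundary_minus n q -> (p = q \/ c1_adj p q) ->
  (Z.abs (sq_index p - sq_index q) <= 1)%Z.
Proof.
  intros [Bp Np] [Bq Nq] [<- | Hadj]; [lia |].
  destruct p as [x y], q as [x' y'].
  apply sq_boundary_cases in Bp, Bq.
  apply pair_neq in Np, Nq.
  assert (Hstep : (x = x' /\ (y - y' = 1 \/ y - y' = -1) \/
                   y = y' /\ (x - x' = 1 \/ x - x' = -1))%Z)
    by (unfold c1_adj in Hadj; cbn [fst snd] in Hadj; lia).
  clear Hadj. unfold sq_index.
  split_tests; lia.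
Qed.

Lemma sq_loop_boundary (k : Z) : sq_boundary n (sq_loop k).
Proof. apply sq_path_boundary, Z.mod_pos_bound. lia. Qed.

Lemma sq_loop_congr (a b : Z) :
  (a mod (8 * n) = b mod (8 * n))%Z -> sq_loop a = sq_loop b.
Proof. unfold sq_loop. intros ->. reflexivity. Qed.

Lemma sq_loop_index (p : pt) : sq_boundary n p -> sq_loop (sq_index p) = p.
Proof.
  intros Hp. unfold sq_loop. rewrite Z.mod_small by (apply sq_index_bound; exact Hp).
  apply sq_path_index. exact Hp.
Qed.

Lemma sq_loop_succ_adj (k : Z) : c1_adj (sq_loop k) (sq_loop (k + 1)).
Proof.
  unfold sq_loop. rewrite <- Zplus_mod_idemp_l.
  pose proof (Z.mod_pos_bound k (8 * n) ltac:(lia)).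
  destruct (Z.eq_dec (k mod (8 * n) + 1) (8 * n)) as [E | E].
  - rewrite E, Z_mod_same_full. replace (k mod (8 * n))%Z with (8 * n - 1)%Z by lia.
    apply sq_path_last_adj.
  - rewrite (Z.mod_small (k mod (8 * n) + 1)) by lia. apply sq_path_succ_adj; lia.
Qed.

Lemma sq_loop_add_half (k : Z) : sq_loop (k + 4 * n) = opp_pt (sq_loop k).
Proof.
  unfold sq_loop. rewrite <- Zplus_mod_idemp_l.
  set (m := (k mod (8 * n))%Z).
  pose proof (Z.mod_pos_bound k (8 * n) ltac:(lia)).
  destruct (Z_lt_le_dec m (4 * n)).
  - rewrite Z.mod_small by lia. apply sq_path_add_half. lia.
  - replace (m + 4 * n)%Z with ((m - 4 * n) + 1 * (8 * n))%Z by ring.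
    rewrite Z_mod_plus_full, Z.mod_small by lia.
    replace m with ((m - 4 * n) + 4 * n)%Z at 2 by ring.
    rewrite sq_path_add_half by lia.
    unfold opp_pt; cbn [fst snd]. rewrite !Z.opp_involutive. now destruct sq_path.
Qed.

Lemma sq_loop_far (k j : Z) :
  (j = 4 * n - 1 \/ j = 4 * n)%Z -> 2 * IZR n - 1 <= d1 (sq_loop k) (sq_loop (k + j)).
Proof.
  assert (Hopp : 2 * IZR n <= d1 (sq_loop k) (sq_loop (k + 4 * n))).
  { rewrite sq_loop_add_half. apply d1_opp_boundary, sq_loop_boundary. }
  intros [-> | ->]; [| lra].
  replace (k + 4 * n)%Z with (k + (4 * n - 1) + 1)%Z in Hopp by ring.
  pose proof (d1_triangle (sq_loop k) (sq_loop (k + (4 * n - 1)))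
                (sq_loop (k + (4 * n - 1) + 1))) as Htri.
  rewrite (d1_c1_adj _ _ (sq_loop_succ_adj _)) in Htri.
  lra.
Qed.

Lemma sq_index_lipschitz (f : pt -> pt) :
  c1_continuous (sq_boundary n) (sq_boundary_minus n) f ->
  forall k, (Z.abs (sq_index (f (sq_loop (k + 1))) - sq_index (f (sq_loop k))) <= 1)%Z.
Proof.
  intros [fY fc] k.
  enough (Z.abs (sq_index (f (sq_loop k)) - sq_index (f (sq_loop (k + 1)))) <= 1)%Z
    by lia.
  apply sq_index_adj; try apply fY, sq_loop_boundary.
  apply fc; [apply sq_loop_boundary | apply sq_loop_boundary | apply sq_loop_succ_adj].
Qed.

Lemma borsuk_ok_lower (t : R) :
  borsuk_ok (sq_boundary n) (sq_boundary_minus n) t -> 2 * IZR n - 1 <= t.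
Proof.
  intros [_ [f [_ [Hf [_ [Hfd _]]]]]].
  set (P k := sq_index (f (sq_loop k))).
  assert (HfP : forall k, f (sq_loop k) = sq_loop (P k)).
  { intros k. symmetry. apply sq_loop_index, (proj1 Hf), sq_loop_boundary. }
  assert (Hper : P (8 * n)%Z = P 0%Z).
  { unfold P. rewrite (sq_loop_congr (8 * n) 0); [reflexivity |].
    rewrite Z_mod_same_full, Zmod_0_l. reflexivity. }
  destruct (Z_lipschitz_periodic_shift P (8 * n) (4 * n - 1) ltac:(lia) Hper
              (sq_index_lipschitz f Hf)) as [k Hk].
  pose proof (Hfd (sq_loop k) (sq_loop_boundary k)) as Hd.
  rewrite HfP in Hd.
  enough (2 * IZR n - 1 <= d1 (sq_loop k) (sq_loop (P k))) by lra.
  destruct Hk as [Hk | Hk]; rewrite (sq_loop_congr _ _ Hk); apply sq_loop_far; lia.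
Qed.

Lemma hausdorff_ok_ge1 (eps : R) :
  hausdorff_ok (sq_boundary n) (sq_boundary_minus n) eps -> 1 <= eps.
Proof.
  intros [_ [HX _]].
  destruct (HX (n, n)) as [b [[_ Hb] Hd]].
  { unfold sq_boundary; cbn [fst snd]. lia. }
  pose proof (d1_neq (n, n) b (not_eq_sym Hb)). lra.
Qed.

Lemma hausdorff_ok_1 : hausdorff_ok (sq_boundary n) (sq_boundary_minus n) 1.
Proof.
  split; [lra | split].
  - intros a Ha. destruct (pt_eq_dec a (n, n)) as [-> | Ha'].
    + exists (n - 1, n)%Z. split.
      * split; [unfold sq_boundary; cbn [fst snd]; lia |].
        intros E. injection E. lia.
      * rewrite d1_c1_adj; [lra |]. unfold c1_adj; cbn [fst snd]. lia.
    + exists a. split; [split; assumption |]. rewrite d1_self. lra.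
  - intros b [Hb _]. exists b. split; [exact Hb |]. rewrite d1_self. lra.
Qed.

End SquareBoundary.

Theorem theorem2p7 (n : Z) (hn : (0 < n)%Z) :
  H1 (sq_boundary n) (sq_boundary_minus n) = Finite 1 /\
  Rbar_le (Finite (2 * IZR n - 1)) (delta_d1 (sq_boundary n) (sq_boundary_minus n)).
Proof.
  split.
  - apply Glb_Rbar_min; [apply hausdorff_ok_1 | apply hausdorff_ok_ge1]; exact hn.
  - apply Glb_Rbar_lower. intros t. apply borsuk_ok_lower. exact hn.
Qed.
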